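(* There exists an MDP $M$ and a policy class $\Pi\subset\Pi_{\mathrm{RNS}}$ with horizon $H=1$ such that $C^M_{\infty;h}\le 2$ (and hence $\mathsf{Cov}^M_{h,\varepsilon}\le2$ as well), yet for all $\varepsilon>0$, $$\inf_{p\in\Delta(\Pi)}\Psi^M_{\infty;h,\varepsilon}(p)\ge\frac{1}{\varepsilon},$$ and in particular $\inf_{p\in\Delta(\Pi)}\Psi^M_{\infty;h,0}(p)=\infty$.
   Context: Episodic reward-free MDP (countable states $\mathcal{X}$, actions $\mathcal{A}$, horizon $H$); $\Pi_{\mathrm{RNS}}$ randomized non-stationary policies; $d^{M,\pi}_h(x,a)$ layer-$h$ occupancy, $d^{M,p}_h=\mathbb{E}_{\pi\sim p}d^{M,\pi}_h$. Definitions: $C^M_{\infty;h}=\inf_{\mu\in\Delta(\mathcal{X}\times\mathcal{A})}\sup_{\pi\in\Pi}\sup_{(x,a)}\frac{d^{M,\pi}_h(x,a)}{\mu(x,a)}$; $\mathsf{Cov}^M_{h,\varepsilon}=\inf_{p\in\Delta(\Pi)}\sup_{\pi\in\Pi}\mathbb{E}^{M,\pi}\big[\frac{d^{M,\pi}_h(x_h,a_h)}{d^{M,p}_h(x_h,a_h)+\varepsilon d^{M,\pi}_h(x_h,a_h)}\big]$; admissible $L_\infty$-coverage $\Psi^M_{\infty;h,\varepsilon}(p)=\sup_{\pi\in\Pi}\sup_{(x,a)}\frac{d^{M,\pi}_h(x,a)}{d^{M,p}_h(x,a)+\varepsilon d^{M,\pi}_h(x,a)}$. *)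

From mathcomp Require Import all_boot all_order all_algebra.
From mathcomp Require Import all_classical all_reals all_analysis.
Set Implicit Arguments. Unset Strict Implicit. Unset Printing Implicit Defensive.
Import GRing.Theory Num.Theory.
Local Open Scope classical_set_scope.
Local Open Scope ring_scope.
Local Open Scope ereal_scope.

(* Episodic reward-free MDPs over countable state/action types, layers
   indexed h = 1, 2, ..., H.  Rewards play no role (reward-free). *)
Section MDP.
Context (R : realType) (X A : countType).

Definition is_dist (T : choiceType) (p : T -> R) : Prop :=
  (forall t, (0 <= p t)%R) /\ \esum_(t in [set: T]) (p t)%:E = 1.

(* init x = P(x_1 = x);  trans h x a x' = P_h(x_{h+1} = x' | x_h = x, a_h = a) *)
Record mdp := MDP {
  horizon : nat;
  init : X -> R;
  trans : nat -> X -> A -> X -> R }.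

Definition valid_mdp (M : mdp) : Prop :=
  is_dist (init M) /\ forall h x a, is_dist (trans M h x a).

(* randomized non-stationary policy: pi h x a = pi_h(a | x) *)
Definition policy := nat -> X -> A -> R.

Definition Pi_RNS : set policy := [set pi | forall h x, is_dist (pi h x)].

(* layer-(n+1) occupancy d_{n+1}^{M,pi}(x,a) *)
Fixpoint occ_aux (M : mdp) (pi : policy) (n : nat) : X * A -> \bar R :=
  match n with
  | 0%N => fun xa => (init M xa.1 * pi 1%N xa.1 xa.2)%:E
  | n'.+1 => fun xa =>
      (\esum_(ya in [set: X * A])
          (occ_aux M pi n' ya * (trans M n'.+1 ya.1 ya.2 xa.1)%:E))
      * (pi n'.+2 xa.1 xa.2)%:E
  end.

Definition occ (M : mdp) (pi : policy) (h : nat) : X * A -> \bar R :=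
  occ_aux M pi h.-1.

Definition Delta (Pi : set policy) : set (policy -> R) :=
  [set p | (forall pi, (0 <= p pi)%R) /\ \esum_(pi in Pi) (p pi)%:E = 1].

Definition occ_mix (M : mdp) (Pi : set policy) (p : policy -> R) (h : nat)
  : X * A -> \bar R :=
  fun xa => \esum_(pi in Pi) ((p pi)%:E * occ M pi h xa).

(* ratio a / b with conventions 0/0 = 0 and a/0 = +oo for a > 0 *)
Definition ediv (a b : \bar R) : \bar R :=
  if b == 0 then (if a == 0 then 0 else +oo) else a * ((fine b)^-1)%:E.

Definition Cinf (M : mdp) (Pi : set policy) (h : nat) : \bar R :=
  ereal_inf [set ereal_sup
      [set r | exists pi xa, Pi pi /\ r = ediv (occ M pi h xa) (mu xa)%:E]
    | mu in [set mu : X * A -> R | is_dist mu]].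

Definition Cov (M : mdp) (Pi : set policy) (h : nat) (eps : R) : \bar R :=
  ereal_inf [set ereal_sup
      [set \esum_(xa in [set: X * A])
            (occ M pi h xa *
             ediv (occ M pi h xa) (occ_mix M Pi p h xa + eps%:E * occ M pi h xa))
        | pi in Pi]
    | p in Delta Pi].

Definition Psi (M : mdp) (Pi : set policy) (h : nat) (eps : R) (p : policy -> R)
  : \bar R :=
  ereal_sup [set r | exists pi xa, Pi pi /\
     r = ediv (occ M pi h xa) (occ_mix M Pi p h xa + eps%:E * occ M pi h xa)].

End MDP.

From mathcomp Require Import all_boot all_order all_algebra.
From mathcomp Require Import all_classical all_reals all_analysis.
From mathcomp Require Import ring lra.
Import Order.TTheory GRing.Theory Num.Theory.
Local Open Scope classical_set_scope.
Local Open Scope ring_scope.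
Local Open Scope ereal_scope.

(* One state, actions in nat, horizon 1.  For n >= 1 the policy [pol n] plays
   the rare action n with probability [halfpow n] = 2^-(n+1) and action 0
   otherwise, while [pol 0] plays a with probability [base_act a] =
   3 (halfpow a)^2.  Every policy is bounded by 2 halfpow, so C_infty <= 2, and
   putting all the mass on [pol 0] bounds Cov by sum_a d(a)^2 / base_act a <= 2.
   But any mixture p gives vanishing weight to [pol i] as i grows, and
   base_act = o(halfpow), so the mixture occupancy of the action i is
   o(halfpow i) and the ratio halfpow i / (d_p(i) + eps halfpow i) tends to
   1/eps (to +oo when eps = 0). *)

Section esum_facts.
Variable R : realType.

Lemma esum_geometric (c r : R) : (0 <= c)%R -> (0 <= r)%R -> (r < 1)%R ->
  \esum_(n in [set: nat]) (c * r ^+ n)%:E = (c / (1 - r))%:E.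
Proof.
move=> c0 r0 r1.
rewrite -nneseries_esumT => [|n]; last by rewrite lee_fin mulr_ge0 ?exprn_ge0.
apply: cvg_lim => //.
rewrite (_ : (fun n => _) = EFin \o series (geometric c r)).
  apply: cvg_EFin; first exact: nearW.
  by apply: cvg_geometric_series; rewrite ger0_norm.
by apply/funext => n /=; rewrite sumEFin.
Qed.

Lemma esum_finite_support (T : choiceType) (S F : set T) (f : T -> \bar R) :
  finite_set F -> F `<=` S -> (forall t, S t -> ~ F t -> f t = 0) ->
  (forall t, S t -> 0 <= f t) -> \esum_(t in S) f t = \sum_(t \in F) f t.
Proof.
move=> finF FS f0 fge0.
rewrite (esumID F) // [X in _ + X]esum1 => [|t [St nFt]]; last exact: f0.
rewrite adde0 (setIidr FS) esum_fset // => t; rewrite inE => Ft.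
exact/fge0/FS.
Qed.

Lemma fsbig_set2 (T : choiceType) (a b : T) (f : T -> \bar R) : a <> b ->
  \sum_(t \in [set a] `|` [set b]) f t = f a + f b.
Proof.
by move=> ab; rewrite fsbigU0 ?fsbig_set1 // => t [/= -> /ab].
Qed.

Lemma esum_unit_pair (T : choiceType) (f : unit * T -> \bar R) :
  \esum_(xa in [set: unit * T]) f xa = \esum_(a in [set: T]) f (tt, a).
Proof.
apply: reindex_esum; split => [//|a b _ _ []//|[[] a] _]; by exists a.
Qed.

Lemma esum_unit (f : unit -> \bar R) : 0 <= f tt ->
  \esum_(x in [set: unit]) f x = f tt.
Proof.
by move=> f0; rewrite (_ : [set: unit] = [set tt]) ?esum_set1 // predeqE => -[].
Qed.

Lemma dist_nat_cvg0 (p : nat -> R) : (forall n, 0 <= p n)%R ->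
  \esum_(n in [set: nat]) (p n)%:E = 1 -> p @ \oo --> 0%R.
Proof.
move=> p0 p1; apply: cvg_series_cvg_0.
apply: (@summable_cvg R predT (EFin \o p)) => // [n _|]; first exact: p0.
rewrite /summable [X in esum X](_ : _ = [set: nat]) ?predeqE //.
rewrite (eq_esum (b := fun n => (p n)%:E)) => [|n _]; last first.
  by rewrite /= ger0_norm.
by rewrite p1 ltry.
Qed.

End esum_facts.

Lemma mulr_div_addr_le (R : realFieldType) (d v e : R) :
  (0 <= d)%R -> (0 < v)%R -> (0 <= e)%R ->
  (d * (d / (v + e * d)) <= d ^+ 2 / v)%R.
Proof.
move=> d0 v0 e0; rewrite mulrA -expr2 ler_wpM2l ?exprn_ge0 //.
by rewrite lef_pV2 ?posrE ?lerDl ?mulr_ge0 // ltr_wpDr ?mulr_ge0.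
Qed.

Lemma ediv_EFin_gt0 (R : realType) (a b : R) : (0 < b)%R ->
  ediv a%:E b%:E = (a / b)%:E.
Proof. by move=> b0; rewrite /ediv eqe gt_eqF. Qed.

Lemma ediv_EFin_ge (R : realType) (a b r : R) : (0 < a)%R -> (0 <= b)%R ->
  (r * b <= a)%R -> r%:E <= ediv a%:E b%:E.
Proof.
move=> a0 b0 rba; have [->|b_neq0] := eqVneq b 0%R.
  by rewrite /ediv eqxx eqe (gt_eqF a0) leey.
have {b0 b_neq0} b0 : (0 < b)%R by rewrite lt_def b_neq0.
by rewrite ediv_EFin_gt0 // lee_fin ler_pdivlMr.
Qed.

Lemma occ1E (R : realType) (X A : countType) (M : mdp R X A) (pi : policy R X A)
    (xa : X * A) :
  occ M pi 1 xa = (init M xa.1 * pi 1%N xa.1 xa.2)%:E.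
Proof. by []. Qed.

Lemma Delta_le1 {R : realType} {X A : countType} {Pi : set (policy R X A)}
    {p : policy R X A -> R} { pi : policy R X A } :
  Delta Pi p -> Pi pi -> (p pi <= 1)%R.
Proof.
move=> [p0 p1] Pi_pi; rewrite -lee_fin -p1; apply: esum_ge; exists [set pi].
  by split => [|_ ->//]; exact: finite_set1.
by rewrite fsbig_set1.
Qed.

Section counterexample.
Variable R : realType.

Definition halfpow (n : nat) : R := (2^-1 ^+ n.+1)%R.

Definition base_act (a : nat) : R := (3 * halfpow a ^+ 2)%R.

Definition act (n a : nat) : R :=
  if n == 0%N then base_act a
  else if a == 0%N then (1 - halfpow n)%R
  else if a == n then halfpow n else 0%R.

Definition pol (n : nat) : policy R unit nat := fun _ _ => act n.

Definition Mex : mdp R unit nat := MDP 1 (fun _ => 1%R) (fun _ _ _ _ => 1%R).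

Definition Piex : set (policy R unit nat) := range pol.

Lemma polE n h x : pol n h x = act n. Proof. by []. Qed.

Lemma halfpow_gt0 n : (0 < halfpow n)%R.
Proof. by rewrite exprn_gt0 // invr_gt0. Qed.

Lemma halfpow_le_half n : (halfpow n <= 2^-1)%R.
Proof.
rewrite /halfpow exprS ler_piMr ?invr_ge0 //.
by rewrite exprn_ile1 ?invf_le1 ?invr_ge0 ?ler1n.
Qed.

Lemma halfpow_cvg0 : halfpow @ \oo --> 0%R.
Proof.
rewrite (_ : halfpow = geometric 2^-1 2^-1); last first.
  by apply/funext => n; rewrite /halfpow exprS.
by apply: cvg_geometric; rewrite ger0_norm ?invf_lt1 ?ltr1n.
Qed.

Lemma esum_halfpow : \esum_(a in [set: nat]) (halfpow a)%:E = 1.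
Proof.
under eq_esum do rewrite /halfpow exprS.
by rewrite esum_geometric ?invf_lt1 ?ltr1n //; congr (_%:E); field.
Qed.

Lemma base_act_gt0 a : (0 < base_act a)%R.
Proof. by rewrite mulr_gt0 ?exprn_gt0 ?halfpow_gt0. Qed.

Lemma esum_base_act : \esum_(a in [set: nat]) (base_act a)%:E = 1.
Proof.
under eq_esum do rewrite /base_act /halfpow -exprM mulnC exprM exprS mulrA.
rewrite esum_geometric ?mulr_ge0 ?exprn_ge0 //; last first.
  by rewrite exprn_ilt1 ?invr_ge0 ?invf_lt1 ?ltr1n.
by congr (_%:E); rewrite expr2; field.
Qed.

Lemma base_act_lt_halfpow a : (0 < a)%N -> (base_act a < halfpow a)%R.
Proof.
case: a => // a _; have h0 := halfpow_gt0 a.+1.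
have h1 : (halfpow a.+1 <= 4^-1)%R.
  rewrite /halfpow exprS -/(halfpow a) (_ : 4^-1 = 2^-1 * 2^-1)%R; last by field.
  by rewrite ler_pM2l ?invr_gt0 ?halfpow_le_half.
rewrite /base_act expr2; nra.
Qed.

Lemma act_ge0 n a : (0 <= act n a)%R.
Proof.
rewrite /act; case: ifP => _; first exact/ltW/base_act_gt0.
case: ifP => _.
  by rewrite subr_ge0 (le_trans (halfpow_le_half n)) // invf_le1 // ler1n.
by case: ifP => _ //; exact/ltW/halfpow_gt0.
Qed.

Lemma act_out_support n a : (n != 0)%N -> (a != 0)%N -> a != n -> act n a = 0%R.
Proof. by rewrite /act => /negbTE -> /negbTE -> /negbTE ->. Qed.

Lemma esum_act_support n (f : nat -> \bar R) : (0 < n)%N ->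
    (forall a, 0 <= f a) -> (forall a, act n a = 0%R -> f a = 0) ->
  \esum_(a in [set: nat]) f a = f 0%N + f n.
Proof.
move=> n0 f0 f_act; rewrite -fsbig_set2; last by move=> n_eq0; rewrite -n_eq0 in n0.
apply: esum_finite_support => // a _ a_out.
apply/f_act/act_out_support; first by rewrite gtn_eqF.
  by apply/eqP => a0; apply: a_out; left.
by apply/eqP => an; apply: a_out; right.
Qed.

Lemma act_dist n : is_dist (act n).
Proof.
split; first exact: act_ge0.
case: n => [|n]; first exact: esum_base_act.
rewrite (@esum_act_support n.+1) // => [|a|a ->//]; last by rewrite lee_fin act_ge0.
by rewrite /act /= eqxx -EFinD subrK.
Qed.

Lemma act_le_2halfpow n a : (act n a <= 2 * halfpow a)%R.
Proof.
have h0 := halfpow_gt0 a; have h1 := halfpow_le_half a.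
rewrite /act; case: ifP => _; first by rewrite /base_act expr2; nra.
case: ifP => [/eqP -> | _].
  by have := halfpow_gt0 n; rewrite {3}/halfpow expr1 divff //; lra.
by case: ifP => [/eqP <- | _]; lra.
Qed.

Lemma valid_Mex : valid_mdp Mex.
Proof.
have dist1 : is_dist (fun _ : unit => 1%R).
  by split => [_|]; rewrite ?esum_unit ?lee_fin.
by split => // h x a.
Qed.

Lemma pol_inj : injective pol.
Proof.
move=> m n /(congr1 (fun pi => pi 1%N tt)); rewrite /pol => act_mn.
wlog lt_mn : m n act_mn / (m < n)%N.
  move=> wlog_mn; case: (ltngtP m n) => [|/wlog_mn|//]; first exact: wlog_mn.
  by move=> nm; apply/esym/nm.
have n0 : (0 < n)%N by apply: leq_ltn_trans lt_mn.
have := congr1 (fun f => f n) act_mn; rewrite {2}/act (gtn_eqF n0) eqxx /act.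
case: eqP => [_ /eqP | _]; first by rewrite lt_eqF ?base_act_lt_halfpow.
by rewrite (gtn_eqF n0) (gtn_eqF lt_mn) => /eqP; rewrite lt_eqF ?halfpow_gt0.
Qed.

Lemma esum_Piex (f : policy R unit nat -> \bar R) :
  \esum_(pi in Piex) f pi = \esum_(n in [set: nat]) f (pol n).
Proof. by apply: esum_image => m n _ _; exact: pol_inj. Qed.

Lemma Cinf_Mex_le2 : Cinf Mex Piex 1 <= 2%:E.
Proof.
apply: ge_ereal_inf; exists (ereal_sup [set r | exists pi xa,
    Piex pi /\ r = ediv (occ Mex pi 1 xa) (halfpow xa.2)%:E]).
  exists (fun xa => halfpow xa.2) => //.
  split => [xa|]; first exact/ltW/halfpow_gt0.
  by rewrite esum_unit_pair esum_halfpow.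
apply: ge_ereal_sup => _ [_ [xa [[n _ <-] ->]]].
rewrite occ1E ediv_EFin_gt0 ?halfpow_gt0 // lee_fin mul1r.
by rewrite ler_pdivrMr ?halfpow_gt0 ?act_le_2halfpow.
Qed.

Lemma indic_pol0 n : \1_[set pol 0] (pol n) = (n == 0%N)%:R :> R.
Proof.
rewrite indicE; congr ((nat_of_bool _)%:R).
by apply/idP/eqP => [/set_mem/pol_inj | ->] //; exact: mem_set.
Qed.

Lemma esum_indic_pol0 (f : policy R unit nat -> \bar R) :
  (forall n, 0 <= f (pol n)) ->
  \esum_(pi in Piex) ((\1_[set pol 0] pi : R)%:E * f pi) = f (pol 0).
Proof.
move=> f0; rewrite esum_Piex (@esum_finite_support _ _ _ [set 0%N]) //.
- by rewrite fsbig_set1 indic_pol0 mul1e.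
- by move=> n _ /eqP /negbTE n0; rewrite indic_pol0 n0 mul0e.
- by move=> n _; rewrite indic_pol0 mule_ge0 ?lee_fin.
Qed.

Lemma Delta_indic_pol0 : Delta Piex \1_[set pol 0].
Proof.
split => [pi|]; first by rewrite indicE.
under eq_esum do rewrite -[(_%:E)]mule1.
by rewrite esum_indic_pol0.
Qed.

Lemma occ_mix_indic_pol0 xa :
  occ_mix Mex Piex \1_[set pol 0] 1 xa = (base_act xa.2)%:E.
Proof.
rewrite /occ_mix esum_indic_pol0 => [|n]; rewrite occ1E /= mul1r //.
by rewrite lee_fin act_ge0.
Qed.

Lemma esum_act_sqr_div_base_le2 n :
  \esum_(a in [set: nat]) (act n a ^+ 2 / base_act a)%:E <= 2%:E.
Proof.
case: n => [|n].
  under eq_esum do rewrite /act /= expr2 mulrK ?unitfE ?gt_eqF ?base_act_gt0 //.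
  by rewrite esum_base_act lee_fin ler1n.
rewrite (@esum_act_support n.+1) // => [|a|a ->]; last 2 first.
- by rewrite lee_fin divr_ge0 ?exprn_ge0 ?act_ge0 ?ltW ?base_act_gt0.
- by rewrite expr0n mul0r.
rewrite /act /= eqxx -EFinD lee_fin.
have h0 := halfpow_gt0 n.+1; have h1 := halfpow_le_half n.+1.
have -> : base_act 0 = (3 / 4)%R by rewrite /base_act /halfpow expr1; field.
have -> : (halfpow n.+1 ^+ 2 / base_act n.+1 = 3^-1)%R.
  by rewrite /base_act; field; rewrite expf_neq0 // gt_eqF.
rewrite expr2; nra.
Qed.

Lemma Cov_Mex_le2 eps : (0 < eps)%R -> Cov Mex Piex 1 eps <= 2%:E.
Proof.
move=> eps0; apply: ge_ereal_inf.
exists (ereal_sup [set \esum_(xa in [set: unit * nat])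
    (occ Mex pi 1 xa * ediv (occ Mex pi 1 xa)
       (occ_mix Mex Piex \1_[set pol 0] 1 xa + eps%:E * occ Mex pi 1 xa))
  | pi in Piex]).
  by exists \1_[set pol 0]; [exact: Delta_indic_pol0|].
apply: ge_ereal_sup => _ [_ [n _ <-] <-].
rewrite esum_unit_pair; apply: le_trans (esum_act_sqr_div_base_le2 n).
apply: le_esum => a _; rewrite occ_mix_indic_pol0 occ1E /= mul1r -EFinM -EFinD.
have eps_ge0 := ltW eps0.
rewrite ediv_EFin_gt0 ?ltr_pwDl ?base_act_gt0 ?mulr_ge0 ?act_ge0 //.
by rewrite -EFinM lee_fin mulr_div_addr_le ?act_ge0 ?base_act_gt0.
Qed.

Lemma occ_mix_Mex p i : Delta Piex p -> (0 < i)%N ->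
  occ_mix Mex Piex p 1 (tt, i) =
  (p (pol 0) * base_act i + p (pol i) * halfpow i)%:E.
Proof.
move=> [p0 _] i0; have i_neq0 : i <> 0%N by move/eqP; rewrite gtn_eqF.
rewrite /occ_mix esum_Piex (@esum_finite_support _ _ _ ([set 0%N] `|` [set i])) //.
- rewrite fsbig_set2 => [|/esym//]; rewrite !occ1E !polE /act /= eqxx (gtn_eqF i0).
  by rewrite !mul1r -!EFinM -EFinD.
- move=> n _ n_out; rewrite occ1E polE act_out_support ?mulr0 ?mule0 //.
  + by apply/eqP => n0; apply: n_out; left.
  + by rewrite gtn_eqF.
  + by apply/eqP => ni; apply: n_out; right.
- by move=> n _; rewrite occ1E -EFinM lee_fin mulr_ge0 ?mul1r ?act_ge0.
Qed.

Lemma exists_neglected_pol p d : (0 < d)%R -> Delta Piex p ->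
  exists i, [/\ (0 < i)%N, (p (pol i) < d)%R & (halfpow i < d / 3)%R].
Proof.
move=> d0 [p_ge0 p1]; have p_cvg0 : (fun n => p (pol n)) @ \oo --> 0%R.
  by apply: dist_nat_cvg0 => //; rewrite -(esum_Piex (fun pi => (p pi)%:E)).
apply: (@filter_ex _ \oo); near=> i; split; near: i.
- exact: nbhs_infty_gt.
- exact: cvgr_lt p_cvg0 _ d0.
- by apply: cvgr_lt halfpow_cvg0 _ _; rewrite divr_gt0.
Unshelve. all: by end_near. Qed.

Lemma Psi_Mex_ge p eps r : Delta Piex p -> (0 <= eps)%R -> (0 < r)%R ->
  (r * eps < 1)%R -> r%:E <= Psi Mex Piex 1 eps p.
Proof.
move=> Dp eps0 r0 reps1; pose d := ((r^-1 - eps) / 2)%R.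
have d0 : (0 < d)%R by rewrite divr_gt0 // subr_gt0 -(ltr_pM2l r0) mulfV ?gt_eqF.
have [i [i0 pi_lt h_lt]] := exists_neglected_pol p d d0 Dp.
apply: le_trans; last first.
  by apply: ereal_sup_ubound; exists (pol i), (tt, i); split; [exists i|].
rewrite occ_mix_Mex // occ1E polE /act (gtn_eqF i0) eqxx /= mul1r -EFinM -EFinD.
have [p_ge0 _] := Dp; have p0_le1 := Delta_le1 Dp (imageT _ 0%N).
have p0_ge0 := p_ge0 (pol 0); have pi_ge0 := p_ge0 (pol i).
have b0 := ltW (base_act_gt0 i); have h0 := halfpow_gt0 i; have h_ge0 := ltW h0.
set h := halfpow i in h0 h_ge0 h_lt *.
apply: ediv_EFin_ge => //; first by rewrite !addr_ge0 ?mulr_ge0.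
have base_le : (p (pol 0) * base_act i <= d * h)%R.
  by rewrite /base_act -/h expr2; nra.
have pi_le : (p (pol i) * h <= d * h)%R by rewrite ler_pM2r // ltW.
have r_d : (r * (d + d + eps) = 1)%R by rewrite -splitr subrK mulfV ?gt_eqF.
rewrite -[leRHS]mul1r -r_d -mulrA ler_pM2l //; lra.
Qed.

End counterexample.

Theorem proposition7p3 (R : realType) :
  exists (X A : countType) (M : mdp R X A) (Pi : set (policy R X A)),
    [/\ valid_mdp M, horizon M = 1%N,
        Pi `<=` @Pi_RNS R X A, Pi !=set0 & countable Pi] /\
    [/\ Cinf M Pi 1 <= 2%:E,
        (forall eps : R, (0 < eps)%R -> Cov M Pi 1 eps <= 2%:E),
        (forall eps : R, (0 < eps)%R ->
           ereal_inf [set Psi M Pi 1 eps p | p in Delta Pi] >= (eps^-1)%:E) &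
        ereal_inf [set Psi M Pi 1 0 p | p in Delta Pi] = +oo].
Proof.
exists unit, nat, (Mex R), (Piex R); split; split => //.
- exact: valid_Mex.
- by move=> _ [n _ <-] h x; exact: act_dist.
- by exists (pol R 0), 0%N.
- exact: sub_countable (card_image_le _ _) (countableP _).
- exact: Cinf_Mex_le2.
- exact: Cov_Mex_le2.
- move=> eps eps0; apply: le_ereal_inf_tmp => _ [p Dp <-].
  apply/lee_mul01Pr => [|s /andP[s0 s1]]; first by rewrite lee_fin invr_ge0 ltW.
  by rewrite -EFinM Psi_Mex_ge ?ltW ?divr_gt0 ?divfK ?gt_eqF.
- apply/ereal_inf_pinfty => _ [p Dp <-]; apply/eqyP => s s0.
  by rewrite Psi_Mex_ge ?mulr0.
Qed.
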